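(* Let $\mathbf{M}=(\mathcal{S},s_I,\mathcal{A},P,\mathcal{Z},O,R)$ be a POMDP and let $\mathbf{M}_{fo}$ be its corresponding fully observable MDP. Then for every finite $N\in\mathbb{N}$, \[ \sup_{\pi \in \Pi(\mathbf{M})}H^{\pi}(S_1, S_2,\ldots, S_N)\;\leq\; \sup_{\pi \in \Pi(\mathbf{M}_{fo})}H^{\pi}(S_1, S_2,\ldots, S_N). \]
   Context: A POMDP is a tuple $\mathbf{M}=(\mathcal{S},s_I,\mathcal{A},P,\mathcal{Z},O,R)$ where $\mathcal{S}$ is a finite set of states, $s_I\in\mathcal{S}$ is the unique initial state, $\mathcal{A}$ is a finite set of actions (all available in every state), $P:\mathcal{S}\times\mathcal{A}\to\Delta(\mathcal{S})$ is a transition function (write $P_{s,a,s'}=P(s'|s,a)$), $\mathcal{Z}$ is a finite set of observations, $O:\mathcal{S}\to\Delta(\mathcal{Z})$ is an observation function (write $O_{s,z}=O(z|s)$), and $R:\mathcal{S}\times\mathcal{A}\to\mathbb{R}$ is a reward function. An observation history of length $t$ is a sequence $(z_1,a_1,z_2,a_2,\ldots,z_t)$ of observations and actions. A controller $\pi$ is a map from observation histories of all lengths to probability distributions over $\mathcal{A}$; $\Pi(\mathbf{M})$ denotes the set of all controllers. A controller $\pi$ induces a stochastic process as follows: $S_1=s_I$; at each time $t$ an observation $Z_t$ is drawn from $O(\cdot|S_t)$, an action $A_t$ is drawn from $\pi(\cdot\mid Z_1,A_1,\ldots,Z_t)$, and $S_{t+1}$ is drawn from $P(\cdot|S_t,A_t)$.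 $H^{\pi}(S_1,\ldots,S_N)$ denotes the joint Shannon entropy of $(S_1,\ldots,S_N)$ under this process (convention $0\log 0=0$). The corresponding fully observable MDP $\mathbf{M}_{fo}$ is obtained from $\mathbf{M}$ by setting $\mathcal{Z}=\mathcal{S}$ and $O_{s,s}=1$ for all $s\in\mathcal{S}$ (so its controllers may depend on the full state–action history). *)

From HB Require Import structures.
From mathcomp Require Import all_boot all_order all_algebra.
From mathcomp Require Import all_classical all_reals.
From mathcomp Require Import exp.
Set Implicit Arguments. Unset Strict Implicit. Unset Printing Implicit Defensive.
Import Order.TTheory GRing.Theory Num.Theory.
Local Open Scope ring_scope.

Record pomdp (R : realType) (S A Z : finType) := Pomdp {
  sI : S;
  trans : S -> A -> S -> R;        (* trans s a s' = P(s' | s, a) *)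
  obs : S -> Z -> R;               (* obs s z = O(z | s) *)
  rew : S -> A -> R;
  trans_ge0 : forall s a s', 0 <= trans s a s';
  trans_sum1 : forall s a, \sum_(s' : S) trans s a s' = 1;
  obs_ge0 : forall s z, 0 <= obs s z;
  obs_sum1 : forall s, \sum_(z : Z) obs s z = 1 }.

(* A controller: pi h z a = probability of action a after history
   h = [(z_1,a_1);...;(z_{t-1},a_{t-1})] and current observation z = z_t. *)
Definition controller (R : realType) (A Z : finType) := seq (Z * A) -> Z -> A -> R.

Definition is_controller (R : realType) (A Z : finType) (pi : controller R A Z) :=
  (forall h z a, 0 <= pi h z a) /\ (forall h z, \sum_(a : A) pi h z a = 1).

(* Probability that, being in state s with history h, the next states are
   exactly the sequence ss (marginalising over observations and actions). *)
Fixpoint path_prob (R : realType) (S A Z : finType) (M : pomdp R S A Z)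
  (pi : controller R A Z) (h : seq (Z * A)) (s : S) (ss : seq S) : R :=
  match ss with
  | [::] => 1
  | s' :: ss' => \sum_(z : Z) \sum_(a : A)
      obs M s z * pi h z a * trans M s a s' * path_prob M pi (rcons h (z, a)) s' ss'
  end.

Definition state_law (R : realType) (S A Z : finType) (M : pomdp R S A Z)
  (pi : controller R A Z) (N : nat) (ss : N.-tuple S) : R :=
  match tval ss with
  | [::] => 1
  | s1 :: rest => (s1 == sI M)%:R * path_prob M pi [::] (sI M) rest
  end.

Definition entropy (R : realType) (T : finType) (p : T -> R) : R :=
  - \sum_(x : T) (if p x == 0 then 0 else p x * ln (p x)).

Definition state_entropy (R : realType) (S A Z : finType) (M : pomdp R S A Z)
  (pi : controller R A Z) (N : nat) : R :=
  entropy (state_law M pi (N := N)).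

(* The fully observable MDP M_fo: Z = S, O(s|s) = 1. *)
Lemma fo_obs_ge0 (R : realType) (S : finType) (s s' : S) : 0 <= ((s == s')%:R : R).
Proof. by case: (s == s'). Qed.

Lemma fo_obs_sum1 (R : realType) (S : finType) (s : S) :
  \sum_(s' : S) ((s == s')%:R : R) = 1.
Proof.
rewrite (bigD1 s) //= eqxx big1 ?addr0 // => s' /negbTE.
by rewrite eq_sym => ->.
Qed.

Definition fully_observable (R : realType) (S A Z : finType)
  (M : pomdp R S A Z) : pomdp R S A S :=
  @Pomdp R S A S (sI M) (trans M) (fun s s' => (s == s')%:R) (rew M)
    (@trans_ge0 _ _ _ _ M) (@trans_sum1 _ _ _ _ M)
    (@fo_obs_ge0 R S) (@fo_obs_sum1 R S).

Definition sup_entropy (R : realType) (S A Z : finType) (M : pomdp R S A Z)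
  (N : nat) : R :=
  sup [set x | exists pi : controller R A Z,
                 is_controller pi /\ x = state_entropy M pi N]%classic.

From mathcomp Require Import all_boot all_order all_algebra.
From mathcomp Require Import all_classical all_reals exp.
Set Implicit Arguments. Unset Strict Implicit. Unset Printing Implicit Defensive.
Import Order.TTheory GRing.Theory Num.Theory.
Local Open Scope ring_scope.

(* Given a POMDP controller pi, let the fully observable controller play
   action a after the state history s_1 ... s_t with the conditional
   probability P^pi(A_t = a | S_1 ... S_t = s_1 ... s_t).  Since the next
   state depends only on the current state and action, both controllers
   induce the same joint law of S_1 ... S_N, hence the same entropy.  The
   POMDP entropies are therefore among the fully observable ones, and the
   latter are bounded (each term -p ln p is at most 1), so the suprema
   compare. *)

Section PathSum.
Variables (R : realType) (S A Z : finType) (M : pomdp R S A Z).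
Variable pi : controller R A Z.

(* The expectation of f (final history) on the event that the states
   following s are xs, starting from the history h. *)
Fixpoint path_sum (h : seq (Z * A)) (s : S) (xs : seq S)
    (f : seq (Z * A) -> R) : R :=
  match xs with
  | [::] => f h
  | s' :: xs' => \sum_(z : Z) \sum_(a : A)
      obs M s z * pi h z a * trans M s a s' * path_sum (rcons h (z, a)) s' xs' f
  end.

Lemma path_prob_sum h s xs : path_prob M pi h s xs = path_sum h s xs (fun=> 1).
Proof.
elim: xs h s => [|s' xs IH] h s //=.
by apply: eq_bigr => z _; apply: eq_bigr => a _; rewrite IH.
Qed.

Lemma eq_path_sum h s xs f g : f =1 g -> path_sum h s xs f = path_sum h s xs g.
Proof.
move=> fg; elim: xs h s => [|s' xs IH] h s /=; first exact: fg.
by apply: eq_bigr => z _; apply: eq_bigr => a _; rewrite IH.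
Qed.

Lemma path_sum_rcons h s xs s' f :
  path_sum h s (rcons xs s') f = path_sum h s xs (fun h' =>
    \sum_(z : Z) \sum_(a : A) obs M (last s xs) z * pi h' z a
                              * trans M (last s xs) a s' * f (rcons h' (z, a))).
Proof.
elim: xs h s => [|x xs IH] h s //=.
by apply: eq_bigr => z _; apply: eq_bigr => a _; rewrite IH.
Qed.

Lemma path_sum_sum (I : finType) h s xs (F : I -> seq (Z * A) -> R) :
  path_sum h s xs (fun h' => \sum_(i : I) F i h') = \sum_(i : I) path_sum h s xs (F i).
Proof.
elim: xs h s => [|s' xs IH] h s //=.
apply/esym; rewrite exchange_big; apply: eq_bigr => z _.
rewrite exchange_big; apply: eq_bigr => a _.
by rewrite IH mulr_sumr.
Qed.

Lemma path_sumZ h s xs c f :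
  path_sum h s xs (fun h' => c * f h') = c * path_sum h s xs f.
Proof.
elim: xs h s => [|s' xs IH] h s //=.
rewrite mulr_sumr; apply: eq_bigr => z _.
rewrite mulr_sumr; apply: eq_bigr => a _.
by rewrite IH mulrCA.
Qed.

Hypothesis pi_ge0 : forall h z a, 0 <= pi h z a.

Lemma path_sum_ge0 h s xs f : (forall h', 0 <= f h') -> 0 <= path_sum h s xs f.
Proof.
move=> f_ge0; elim: xs h s => [|s' xs IH] h s //=.
apply: sumr_ge0 => z _; apply: sumr_ge0 => a _.
by rewrite !mulr_ge0 ?obs_ge0 ?trans_ge0.
Qed.

End PathSum.

Definition const_controller {R : realType} {A Z : finType} (a0 : A) : controller R A Z :=
  fun _ _ a => (a0 == a)%:R.

Section Controllers.
Variables (R : realType) (S A Z : finType).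

Lemma const_controllerP a0 : is_controller (const_controller a0 : controller R A Z).
Proof. by split=> [h z a|h z]; [exact: fo_obs_ge0 | exact: fo_obs_sum1]. Qed.

(* Z is nonempty since O(. | s_I) sums to 1. *)
Lemma controller_card_gt0 (M : pomdp R S A Z) (pi : controller R A Z) :
  is_controller pi -> (0 < #|A|)%N.
Proof.
case=> _ pi_sum1; rewrite lt0n; apply/negP => /eqP/card0_eq A0.
have := obs_sum1 M (sI M).
under eq_bigr => z _ do rewrite -[obs _ _ _]mulr1 -(pi_sum1 [::] z) big_pred0 // mulr0.
by rewrite big1 // => /eqP; rewrite eq_sym oner_eq0.
Qed.

Lemma sup_entropy_card0 (M : pomdp R S A Z) N : #|A| = 0%N -> sup_entropy M N = 0.
Proof.
move=> A0; rewrite /sup_entropy -[RHS]sup0; congr sup.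
apply/seteqP; split=> // x [pi [pic _]].
by move: (controller_card_gt0 M pic); rewrite A0.
Qed.

End Controllers.

Lemma entropy_le_card (R : realType) (T : finType) (p : T -> R) :
  (forall x, 0 <= p x) -> entropy p <= #|T|%:R.
Proof.
move=> p_ge0; rewrite /entropy -sumrN -sumr_const.
apply: ler_sum => x _; case: eqP => [_|/eqP px0]; first by rewrite oppr0.
have px_gt0 : 0 < p x by rewrite lt0r px0 p_ge0.
(* -p ln p = p ln (1/p) <= p (1/p) *)
rewrite -mulrN -lnV ?posrE // -[leRHS](divff px0) ler_pM2l //.
by apply/ltW/ln_sublinear; rewrite invr_gt0.
Qed.

Lemma state_law_ge0 (R : realType) (S A Z : finType) (M : pomdp R S A Z)
    (pi : controller R A Z) N (ss : N.-tuple S) :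
  is_controller pi -> 0 <= state_law M pi ss.
Proof.
case=> pi_ge0 _; rewrite /state_law; case: (tval ss) => // s1 rest.
by rewrite mulr_ge0 ?fo_obs_ge0 // path_prob_sum path_sum_ge0.
Qed.

Lemma path_prob_fully_observable (R : realType) (S A Z : finType)
    (M : pomdp R S A Z) (pi : controller R A S) h s s' ss :
  path_prob (fully_observable M) pi h s (s' :: ss) =
  \sum_(a : A) pi h s a * trans M s a s' * path_prob (fully_observable M) pi (rcons h (s, a)) s' ss.
Proof.
rewrite /= (bigD1 s) //= [X in _ + X]big1 ?addr0 => [|z zs]; last first.
  by rewrite [s == z]eq_sym (negbTE zs) big1 // => a _; rewrite !mul0r.
by apply: eq_bigr => a _; rewrite eqxx mul1r.
Qed.

Section FullyObservableController.
Variables (R : realType) (S A Z : finType) (M : pomdp R S A Z).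
Variables (pi : controller R A Z) (a0 : A).
Hypothesis pi_ge0 : forall h z a, 0 <= pi h z a.
Hypothesis pi_sum1 : forall h z, \sum_(a : A) pi h z a = 1.

Local Notation s0 := (sI M).

(* States are indexed from S_2 on: S_1 = s0 is fixed. *)
Definition state_prob (xs : seq S) : R := path_prob M pi [::] s0 xs.

Definition state_action_prob (xs : seq S) (a : A) : R :=
  path_sum M pi [::] s0 xs (fun h => \sum_(z : Z) obs M (last s0 xs) z * pi h z a).

(* On a null state history the action is irrelevant; a0 keeps it a law. *)
Definition cond_action (xs : seq S) (a : A) : R :=
  if state_prob xs == 0 then (a0 == a)%:R else state_action_prob xs a / state_prob xs.

(* The recorded history starts at s_I, which cond_action does not index. *)
Definition fo_controller : controller R A S :=
  fun h s => cond_action (behead (rcons (map fst h) s)).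

Fixpoint fo_path_prob (xs : seq S) (s : S) (ss : seq S) : R :=
  match ss with
  | [::] => 1
  | s' :: ss' => \sum_(a : A)
      cond_action xs a * trans M s a s' * fo_path_prob (rcons xs s') s' ss'
  end.

Lemma state_prob_ge0 xs : 0 <= state_prob xs.
Proof. by rewrite /state_prob path_prob_sum path_sum_ge0. Qed.

Lemma state_action_prob_ge0 xs a : 0 <= state_action_prob xs a.
Proof.
apply: path_sum_ge0 => // h.
by apply: sumr_ge0 => z _; rewrite mulr_ge0 ?obs_ge0.
Qed.

Lemma sum_state_action_prob xs : \sum_(a : A) state_action_prob xs a = state_prob xs.
Proof.
rewrite /state_prob path_prob_sum -path_sum_sum; apply: eq_path_sum => h.
rewrite exchange_big -(obs_sum1 M (last s0 xs)) /=.
by apply: eq_bigr => z _; rewrite -mulr_sumr pi_sum1 mulr1.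
Qed.

Lemma state_prob_cond_action xs a :
  state_prob xs * cond_action xs a = state_action_prob xs a.
Proof.
rewrite /cond_action; have [P0|P0] := eqVneq (state_prob xs) 0; last first.
  by rewrite mulrC divfK.
rewrite P0 mul0r; move: P0; rewrite -sum_state_action_prob => /psumr_eq0P-> //.
by move=> b _; apply: state_action_prob_ge0.
Qed.

Lemma fo_controllerP : is_controller fo_controller.
Proof.
split=> [h s a|h s]; rewrite /fo_controller /cond_action.
  case: eqP => _; first exact: fo_obs_ge0.
  by rewrite divr_ge0 ?state_action_prob_ge0 ?state_prob_ge0.
case: eqP => [_|/eqP P0]; first exact: fo_obs_sum1.
by rewrite -mulr_suml sum_state_action_prob divff.
Qed.

Lemma path_prob_fo_controller h s ss :
  path_prob (fully_observable M) fo_controller h s ss =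
  fo_path_prob (behead (rcons (map fst h) s)) s ss.
Proof.
elim: ss h s => [|s' ss IH] h s //.
rewrite path_prob_fully_observable /=; apply: eq_bigr => a _.
by rewrite IH map_rcons /fo_controller; case: (map fst h).
Qed.

Lemma state_prob_rcons xs s' :
  state_prob (rcons xs s') = \sum_(a : A) state_action_prob xs a * trans M (last s0 xs) a s'.
Proof.
rewrite /state_prob !path_prob_sum path_sum_rcons.
under eq_path_sum => h do rewrite exchange_big.
rewrite path_sum_sum; apply: eq_bigr => a _.
rewrite [RHS]mulrC -path_sumZ; apply: eq_path_sum => h.
by rewrite mulr_sumr; apply: eq_bigr => z _; rewrite mulr1 mulrC.
Qed.

Lemma state_prob_cat xs ss :
  state_prob (xs ++ ss) = state_prob xs * fo_path_prob xs (last s0 xs) ss.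
Proof.
elim: ss xs => [|s' ss IH] xs /=; first by rewrite cats0 mulr1.
rewrite -cat_rcons IH last_rcons state_prob_rcons mulr_suml mulr_sumr.
by apply: eq_bigr => a _; rewrite !mulrA state_prob_cond_action.
Qed.

Lemma state_law_fo_controller N (ss : N.-tuple S) :
  state_law M pi ss = state_law (fully_observable M) fo_controller ss.
Proof.
rewrite /state_law; case: (tval ss) => //= s1 rest.
have := state_prob_cat [::] rest; rewrite /state_prob /= mul1r => ->.
by rewrite path_prob_fo_controller.
Qed.

Lemma state_entropy_fo_controller N :
  state_entropy M pi N = state_entropy (fully_observable M) fo_controller N.
Proof. by congr entropy; apply: funext => ss; apply: state_law_fo_controller. Qed.

End FullyObservableController.

Theorem theorem1 (R : realType) (S A Z : finType) (M : pomdp R S A Z) (N : nat) :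
  sup_entropy M N <= sup_entropy (fully_observable M) N.
Proof.
have [A0|/card_gt0P[a0 _]] := posnP #|A|; first by rewrite !sup_entropy_card0.
have const_attained (Z' : finType) (M' : pomdp R S A Z') :
    exists pi, is_controller pi /\ state_entropy M' (const_controller a0) N = state_entropy M' pi N.
  by exists (const_controller a0); split=> //; apply: const_controllerP.
apply: sup_le.
- move=> x [pi [[pi_ge0 pi_sum1] ->]]; apply/le_down.
  exists (fo_controller M pi a0); split; first exact: fo_controllerP pi_ge0 pi_sum1.
  exact: state_entropy_fo_controller pi_ge0 pi_sum1 N.
- by exists (state_entropy M (const_controller a0) N); apply: const_attained.
- split; first by exists (state_entropy (fully_observable M) (const_controller a0) N);
    apply: const_attained.
  exists #|{: N.-tuple S}|%:R => x [pi [pic ->]].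
  by apply: entropy_le_card => ss; apply: state_law_ge0.
Qed.
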